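(* For every $\mathcal{L}_{A}^{\Box}$-formula $\varphi$: if $\varphi$ is $\mathsf{LK(A)}$-derivable (i.e. there is a closed $\mathsf{LK(A)}$-tableau for $\varphi$), then $\varphi$ is $\mathsf{K(A)}$-valid.
   Context: $\mathcal{L}_{A}^{\Box}$-formulas are built from a countably infinite set $\mathrm{Var}$ of variables with binary $\wedge,\vee,\&,\to$, constant $\overline{0}$, unary $\Box$. A $\mathsf{K(A)}$-model $\langle W,R,V\rangle$: nonempty $W$, $R\subseteq W\times W$, $V\colon\mathrm{Var}\times W\to[-r,r]$ for some real $r\ge0$, extended by $\wedge=\min$, $\vee=\max$, $\&=+$, $V(\varphi\to\psi,x)=V(\psi,x)-V(\varphi,x)$, $V(\overline{0},x)=0$, $V(\Box\varphi,x)=\inf_{\mathbb{R}}\{V(\varphi,y):Rxy\}$ (empty infimum $=0$). $\varphi$ is $\mathsf{K(A)}$-valid if $V(\varphi,x)\ge0$ for all models and worlds. Tableau calculus $\mathsf{LK(A)}$: a labelled formula is a pair $\varphi^{k}$ of a formula and a natural number. Nodes are either labelled inequations $\Gamma\rhd\Delta$, with $\rhd\in\{>,\ge\}$ and $\Gamma,\Delta$ finite multisets of labelled formulas, or relations $rij$ with $i,j\in\mathbb{N}$. A tableau is a finite tree of nodes grown by the rules below: if the nodes above the line occur on a branch $B$, $B$ may be extended by the nodes below (all on $B$), except for the branching rules, where $B$ splits into two branches each extended by one of the listed alternatives; $\rhd$ is the same in premise and conclusion. Rules: ($\overline{0}\rhd$) from $\Gamma,\overline{0}^{i}\rhd\Delta$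 add $\Gamma\rhd\Delta$; ($\rhd\overline{0}$) from $\Gamma\rhd\overline{0}^{i},\Delta$ add $\Gamma\rhd\Delta$; ($\&\rhd$) from $\Gamma,(\varphi\&\psi)^{i}\rhd\Delta$ add $\Gamma,\varphi^{i},\psi^{i}\rhd\Delta$; ($\rhd\&$) from $\Gamma\rhd(\varphi\&\psi)^{i},\Delta$ add $\Gamma\rhd\varphi^{i},\psi^{i},\Delta$; ($\to\rhd$) from $\Gamma,(\varphi\to\psi)^{i}\rhd\Delta$ add $\Gamma,\psi^{i}\rhd\varphi^{i},\Delta$; ($\rhd\to$) from $\Gamma\rhd(\varphi\to\psi)^{i},\Delta$ add $\Gamma,\varphi^{i}\rhd\psi^{i},\Delta$; ($\wedge\rhd$) from $\Gamma,(\varphi\wedge\psi)^{i}\rhd\Delta$ add both $\Gamma,\varphi^{i}\rhd\Delta$ and $\Gamma,\psi^{i}\rhd\Delta$; ($\rhd\wedge$, branching) from $\Gamma\rhd(\varphi\wedge\psi)^{i},\Delta$ branch into $\Gamma\rhd\varphi^{i},\Delta$ or $\Gamma\rhd\psi^{i},\Delta$; ($\vee\rhd$, branching) from $\Gamma,(\varphi\vee\psi)^{i}\rhd\Delta$ branch into $\Gamma,\varphi^{i}\rhd\Delta$ or $\Gamma,\psi^{i}\rhd\Delta$; ($\rhd\vee$) from $\Gamma\rhd(\varphi\vee\psi)^{i},\Delta$ add both $\Gamma\rhd\varphi^{i},\Delta$ and $\Gamma\rhd\psi^{i},\Delta$; ($\Box\rhd$) from $rij$ and $\Gamma,(\Box\varphi)^{i}\rhd\Delta$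 add $\varphi^{j}\ge(\Box\varphi)^{i}$; ($\rhd\Box$) from $\Gamma\rhd(\Box\varphi)^{i},\Delta$ add $(\Box\varphi)^{i}\ge\varphi^{j}$ and $rij$ for a new label $j$; (ex) from $rik$ add $rkj$ for a new label $j$. The system of inequations associated to a branch consists of the labelled inequations on it containing only labelled formulas of the form $p^{i}$ ($p\in\mathrm{Var}$) or $(\Box\psi)^{i}$, each regarded as a real variable, each inequation read as an inequality between the sums of these variables (empty sum $=0$). A branch is closed if this system has no solution over $\mathbb{R}$; a tableau is closed if all its branches are closed. A tableau for $\varphi$ is one whose root is $[\,]>[\varphi^{1}]$ followed by the node $r12$; $\varphi$ is $\mathsf{LK(A)}$-derivable if there is a closed tableau for $\varphi$. *)

From Stdlib Require Import Reals List Permutation.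
From Coquelicot Require Import Rbar Lub.
Import ListNotations.
Open Scope R_scope.

Inductive form : Type :=
| FVar  : nat -> form
| FAnd  : form -> form -> form
| FOr   : form -> form -> form
| FAmp  : form -> form -> form
| FImp  : form -> form -> form
| FZero : form
| FBox  : form -> form.

Record model : Type := {
  world : Type;
  world_inhabited : inhabited world;
  acc : world -> world -> Prop;
  val : nat -> world -> R;
  bound : R;
  bound_nonneg : 0 <= bound;
  val_bounded : forall p x, - bound <= val p x <= bound
}.

(** Infimum in R of a set of reals, with the convention that the empty
    infimum is 0.  [Glb_Rbar E] is the infimum in the extended reals; it is
    [p_infty] exactly when [E] is empty, and [real p_infty = 0].  For the
    (bounded, nonempty) sets arising below it is the ordinary real infimum. *)
Definition inf_R (E : R -> Prop) : R := real (Glb_Rbar E).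

Fixpoint eval (M : model) (phi : form) (x : world M) : R :=
  match phi with
  | FVar p => val M p x
  | FAnd a b => Rmin (eval M a x) (eval M b x)
  | FOr a b => Rmax (eval M a x) (eval M b x)
  | FAmp a b => eval M a x + eval M b x
  | FImp a b => eval M b x - eval M a x
  | FZero => 0
  | FBox a => inf_R (fun v => exists y, acc M x y /\ v = eval M a y)
  end.

Definition KA_valid (phi : form) : Prop :=
  forall (M : model) (x : world M), 0 <= eval M phi x.

Definition lform : Type := (form * nat)%type.

Inductive rel_sym : Type := Gt | Ge.

(** Nodes: labelled inequations [Ineq G s D] (G s D, multisets represented
    as lists, rules match them up to permutation) or relations [Rel i j]. *)
Inductive node : Type :=
| Ineq : list lform -> rel_sym -> list lform -> node
| Rel  : nat -> nat -> node.

Definition branch := list node.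

Definition node_labels (n : node) : list nat :=
  match n with
  | Ineq G _ D => map snd G ++ map snd D
  | Rel i j => [i; j]
  end.

Definition fresh (j : nat) (B : branch) : Prop :=
  forall n, In n B -> ~ In j (node_labels n).

(** One rule application to branch [B]; [exts] lists the alternatives
    (one list of added nodes for non-branching rules, two for branching). *)
Inductive step (B : branch) : list (list node) -> Prop :=
| st_zero_l : forall L G s D i, In (Ineq L s D) B ->
    Permutation L ((FZero, i) :: G) -> step B [[Ineq G s D]]
| st_zero_r : forall G s L D i, In (Ineq G s L) B ->
    Permutation L ((FZero, i) :: D) -> step B [[Ineq G s D]]
| st_amp_l : forall L G s D a b i, In (Ineq L s D) B ->
    Permutation L ((FAmp a b, i) :: G) ->
    step B [[Ineq ((a, i) :: (b, i) :: G) s D]]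
| st_amp_r : forall G s L D a b i, In (Ineq G s L) B ->
    Permutation L ((FAmp a b, i) :: D) ->
    step B [[Ineq G s ((a, i) :: (b, i) :: D)]]
| st_imp_l : forall L G s D a b i, In (Ineq L s D) B ->
    Permutation L ((FImp a b, i) :: G) ->
    step B [[Ineq ((b, i) :: G) s ((a, i) :: D)]]
| st_imp_r : forall G s L D a b i, In (Ineq G s L) B ->
    Permutation L ((FImp a b, i) :: D) ->
    step B [[Ineq ((a, i) :: G) s ((b, i) :: D)]]
| st_and_l : forall L G s D a b i, In (Ineq L s D) B ->
    Permutation L ((FAnd a b, i) :: G) ->
    step B [[Ineq ((a, i) :: G) s D; Ineq ((b, i) :: G) s D]]
| st_and_r : forall G s L D a b i, In (Ineq G s L) B ->
    Permutation L ((FAnd a b, i) :: D) ->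
    step B [[Ineq G s ((a, i) :: D)]; [Ineq G s ((b, i) :: D)]]
| st_or_l : forall L G s D a b i, In (Ineq L s D) B ->
    Permutation L ((FOr a b, i) :: G) ->
    step B [[Ineq ((a, i) :: G) s D]; [Ineq ((b, i) :: G) s D]]
| st_or_r : forall G s L D a b i, In (Ineq G s L) B ->
    Permutation L ((FOr a b, i) :: D) ->
    step B [[Ineq G s ((a, i) :: D); Ineq G s ((b, i) :: D)]]
| st_box_l : forall L G s D a i j, In (Rel i j) B -> In (Ineq L s D) B ->
    Permutation L ((FBox a, i) :: G) ->
    step B [[Ineq [(a, j)] Ge [(FBox a, i)]]]
| st_box_r : forall G s L D a i j, In (Ineq G s L) B ->
    Permutation L ((FBox a, i) :: D) -> fresh j B ->
    step B [[Ineq [(FBox a, i)] Ge [(a, j)]; Rel i j]]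
| st_ex : forall i k j, In (Rel i k) B -> fresh j B ->
    step B [[Rel k j]].

Definition atomic (f : form) : Prop :=
  match f with FVar _ | FBox _ => True | _ => False end.

Definition atomic_node (n : node) : Prop :=
  match n with
  | Ineq G _ D => Forall (fun lf => atomic (fst lf)) G /\
                  Forall (fun lf => atomic (fst lf)) D
  | Rel _ _ => False
  end.

Definition sum_lf (a : form -> nat -> R) (G : list lform) : R :=
  fold_right (fun lf acc => a (fst lf) (snd lf) + acc) 0 G.

Definition sat_node (a : form -> nat -> R) (n : node) : Prop :=
  match n with
  | Ineq G Gt D => sum_lf a G > sum_lf a D
  | Ineq G Ge D => sum_lf a G >= sum_lf a D
  | Rel _ _ => True
  end.

Definition branch_closed (B : branch) : Prop :=
  ~ exists a : form -> nat -> R,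
      forall n, In n B -> atomic_node n -> sat_node a n.

Inductive closable : branch -> Prop :=
| cl_closed : forall B, branch_closed B -> closable B
| cl_step : forall B exts, step B exts ->
    (forall N, In N exts -> closable (N ++ B)) -> closable B.

Definition root_branch (phi : form) : branch :=
  [Ineq [] Gt [(phi, 1%nat)]; Rel 1 2].

Definition LKA_derivable (phi : form) : Prop := closable (root_branch phi).

(* Soundness via an approximate semantics of branches.  Adding a world that sees only
   itself and where every variable is 0, and letting the dead ends see it, changes no
   value of a formula, so we may assume that every world has a successor.  If [phi] is
   negative at [x], send label 1 to [x] and label 2 to a successor of [x]: the root
   branch then holds in the sense that relations [r i j] are edges, strict inequations
   hold with the margin [d = - V(phi, x)] and weak ones up to any error [e > 0].  Every
   rule keeps some alternative holding, for the same [d] and [e]; the error is needed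
   because the infimum defining [Box] need not be attained, so the world chosen for a
   new label is only [e]-optimal.  As a tableau has finitely many branches, one [e]
   works for all of them.  On a closed branch this is impossible for small [e]: formula
   values are bounded, so by Bolzano-Weierstrass the assignments obtained for
   [e = 1/(n+1)] have a limit, which solves the system of the branch exactly. *)

From Pilot Require Import Defs.
From Stdlib Require Import Reals Lra List Permutation Classical ClassicalEpsilon.
From Coquelicot Require Import Coquelicot.
Import ListNotations.
Open Scope R_scope.

Lemma is_lim_seq_inv_succ : is_lim_seq (fun n => / (INR n + 1)) 0.
Proof.
  assert (H : is_lim_seq (fun n => INR n + 1) p_infty).
  { eapply is_lim_seq_plus; [apply is_lim_seq_INR | apply is_lim_seq_const | reflexivity]. }
  exact (is_lim_seq_inv _ _ H ltac:(discriminate)).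
Qed.

Lemma inv_succ_pos (n : nat) : 0 < / (INR n + 1).
Proof. apply Rinv_0_lt_compat. pose proof (pos_INR n). lra. Qed.

Lemma bounded_seq_subseq (u : nat -> R) (b : R) :
  (forall n, - b <= u n <= b) ->
  exists phi, filterlim phi eventually eventually /\
    ex_finite_lim_seq (fun n => u (phi n)).
Proof.
  intros Hb.
  destruct (Bolzano_Weierstrass u _ (compact_P3 (- b) b) Hb) as [l Hl].
  assert (Hclose : forall kN : nat * nat, exists p,
             (snd kN <= p)%nat /\ Rabs (u p - l) < / (INR (fst kN) + 1)).
  { intros [k N]. apply (Hl (fun y => Rabs (y - l) < / (INR k + 1)) N).
    exists (mkposreal _ (inv_succ_pos k)). intros y Hy. exact Hy. }
  destruct (choice _ Hclose) as [g Hg].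
  set (psi := fix psi k :=
         match k with O => g (O, O) | S k' => g (S k', S (psi k')) end).
  assert (Hpsi : forall k, Rabs (u (psi k) - l) < / (INR k + 1)).
  { intros [|k]; apply (Hg (_, _)). }
  exists psi. split.
  - apply eventually_subseq. intros n. apply (Hg (S n, S (psi n))).
  - exists l.
    apply (is_lim_seq_le_le (fun n => l - / (INR n + 1)) _ (fun n => l + / (INR n + 1))).
    + intros n. specialize (Hpsi n). apply Rabs_lt_between in Hpsi. lra.
    + replace (Finite l) with (Finite (l - 0)) by (f_equal; lra).
      apply is_lim_seq_minus'; [apply is_lim_seq_const | apply is_lim_seq_inv_succ].
    + replace (Finite l) with (Finite (l + 0)) by (f_equal; lra).
      apply is_lim_seq_plus'; [apply is_lim_seq_const | apply is_lim_seq_inv_succ].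
Qed.

Lemma bounded_seqs_common_subseq {T : Type} (A : list T) (u : nat -> T -> R) (b : T -> R) :
  (forall n k, - b k <= u n k <= b k) ->
  exists phi, filterlim phi eventually eventually /\
    forall k, In k A -> ex_finite_lim_seq (fun n => u (phi n) k).
Proof.
  intros Hb. induction A as [|k A IH].
  - exists (fun n => n). split; [intros P HP; exact HP | intros k []].
  - destruct IH as [phi [Hphi Hlim]].
    destruct (bounded_seq_subseq (fun n => u (phi n) k) (b k)) as [psi [Hpsi [l Hl]]].
    { intros n. apply Hb. }
    exists (fun n => phi (psi n)). split.
    + exact (filterlim_comp _ _ _ psi phi _ _ _ Hpsi Hphi).
    + intros x [<-|Hx].
      * exists l. exact Hl.
      * destruct (Hlim x Hx) as [lx Hlx]. exists lx.
        exact (is_lim_seq_subseq (fun n => u (phi n) x) lx psi Hpsi Hlx).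
Qed.

Lemma ex_pos_forall_In {X : Type} (l : list X) (P : X -> R -> Prop) :
  (forall x e e', 0 < e' <= e -> P x e -> P x e') ->
  (forall x, In x l -> exists e, 0 < e /\ P x e) ->
  exists e, 0 < e /\ forall x, In x l -> P x e.
Proof.
  intros Hmono. induction l as [|x l IH]; intros H.
  - exists 1. split; [lra | intros x []].
  - destruct (H x (or_introl eq_refl)) as [e0 [He0 HP0]].
    destruct IH as [e1 [He1 HP1]]; [intros y Hy; apply H; right; exact Hy|].
    exists (Rmin e0 e1). assert (0 < Rmin e0 e1) by (apply Rmin_glb_lt; assumption).
    split; [assumption|]. intros y [<-|Hy].
    + apply (Hmono _ e0); [split; [assumption | apply Rmin_l] | exact HP0].
    + apply (Hmono _ e1); [split; [assumption | apply Rmin_r] | exact (HP1 y Hy)].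
Qed.

Lemma Glb_Rbar_finite (E : R -> Prop) (x m : R) :
  E x -> (forall y, E y -> m <= y) -> Glb_Rbar E = Finite (inf_R E).
Proof.
  intros Hx Hm. destruct (Glb_Rbar_correct E) as [Hlb Hglb].
  pose proof (Hlb x Hx) as Hle.
  assert (Hge : Rbar_le m (Glb_Rbar E)) by (apply Hglb; intros y Hy; apply Hm, Hy).
  unfold inf_R. destruct (Glb_Rbar E); simpl in *; easy.
Qed.

Section Infimum.
Variables (E : R -> Prop) (x m : R).
Hypotheses (Hx : E x) (Hm : forall y, E y -> m <= y).

Lemma inf_R_le_elem (y : R) : E y -> inf_R E <= y.
Proof.
  intros Hy. pose proof (proj1 (Glb_Rbar_correct E) y Hy) as H.
  rewrite (Glb_Rbar_finite E x m Hx Hm) in H. exact H.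
Qed.

Lemma inf_R_ge_lb : m <= inf_R E.
Proof.
  assert (H : Rbar_le m (Glb_Rbar E)).
  { apply (proj2 (Glb_Rbar_correct E)). intros y Hy. apply Hm, Hy. }
  rewrite (Glb_Rbar_finite E x m Hx Hm) in H. exact H.
Qed.

Lemma inf_R_approx (eps : R) : 0 < eps -> exists y, E y /\ y < inf_R E + eps.
Proof.
  intros Heps. apply NNPP. intros Hno.
  assert (Hlb : is_lb_Rbar E (inf_R E + eps)).
  { intros y Hy. simpl. apply Rnot_lt_le. intros Hlt. apply Hno. exists y. auto. }
  pose proof (proj2 (Glb_Rbar_correct E) _ Hlb) as H.
  rewrite (Glb_Rbar_finite E x m Hx Hm) in H. simpl in H. lra.
Qed.

End Infimum.

Lemma inf_R_empty (E : R -> Prop) : (forall x, ~ E x) -> inf_R E = 0.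
Proof.
  intros H. unfold inf_R. rewrite (is_glb_Rbar_unique E p_infty); [reflexivity|].
  split; [intros x Hx; exfalso; exact (H x Hx) | intros [b| |] _; simpl; auto].
Qed.

Lemma inf_R_singleton (E : R -> Prop) (c : R) : (forall x, E x <-> x = c) -> inf_R E = c.
Proof.
  intros H.
  assert (Hc : E c) by (apply H; reflexivity).
  assert (Hm : forall y, E y -> c <= y) by (intros y Hy; apply H in Hy; lra).
  pose proof (inf_R_le_elem E c c Hc Hm c Hc). pose proof (inf_R_ge_lb E c c Hc Hm). lra.
Qed.

Lemma inf_R_bounded (E : R -> Prop) (b : R) :
  0 <= b -> (forall x, E x -> - b <= x <= b) -> - b <= inf_R E <= b.
Proof.
  intros Hb HE. destruct (classic (exists x, E x)) as [[x Hx]|Hempty].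
  - assert (Hm : forall y, E y -> - b <= y) by (intros y Hy; apply HE, Hy).
    pose proof (inf_R_le_elem E x (- b) Hx Hm x Hx). pose proof (inf_R_ge_lb E x (- b) Hx Hm).
    pose proof (HE x Hx). lra.
  - rewrite inf_R_empty; [lra|]. intros x Hx. apply Hempty. exists x. exact Hx.
Qed.

Fixpoint form_bound (r : R) (f : form) : R :=
  match f with
  | FVar _ => r
  | FAnd a b | FOr a b | FAmp a b | FImp a b => form_bound r a + form_bound r b
  | FZero => 0
  | FBox a => form_bound r a
  end.

Lemma eval_bounded (M : model) (f : form) (x : world M) :
  - form_bound (Defs.bound M) f <= eval M f x <= form_bound (Defs.bound M) f.
Proof.
  revert x.
  induction f as [p|a IHa b IHb|a IHa b IHb|a IHa b IHb|a IHa b IHb| |a IHa];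
    intros x; simpl.
  - apply val_bounded.
  - pose proof (IHa x); pose proof (IHb x).
    unfold Rmin; destruct Rle_dec; lra.
  - pose proof (IHa x); pose proof (IHb x).
    unfold Rmax; destruct Rle_dec; lra.
  - pose proof (IHa x); pose proof (IHb x). lra.
  - pose proof (IHa x); pose proof (IHb x). lra.
  - pose proof (bound_nonneg M). lra.
  - apply inf_R_bounded; [pose proof (IHa x); lra|].
    intros v [y [_ ->]]. apply IHa.
Qed.

Section BoxSemantics.
Variables (M : model) (a : form) (x : world M).

Let succ_values := fun v => exists y, acc M x y /\ v = eval M a y.

Let succ_values_lb (v : R) : succ_values v -> - form_bound (Defs.bound M) a <= v.
Proof. intros [y [_ ->]]. apply eval_bounded. Qed.

Let succ_value_of (y : world M) : acc M x y -> succ_values (eval M a y).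
Proof. intros Hy. exists y. auto. Qed.

Lemma eval_box_le (y : world M) : acc M x y -> eval M (FBox a) x <= eval M a y.
Proof.
  intros Hy. exact (inf_R_le_elem _ _ _ (succ_value_of y Hy) succ_values_lb _ (succ_value_of y Hy)).
Qed.

Lemma eval_box_approx (y : world M) (eps : R) : acc M x y -> 0 < eps ->
  exists z, acc M x z /\ eval M a z < eval M (FBox a) x + eps.
Proof.
  intros Hy Heps.
  destruct (inf_R_approx _ _ _ (succ_value_of y Hy) succ_values_lb eps Heps)
    as [v [[z [Hz ->]] Hlt]].
  exists z. auto.
Qed.

End BoxSemantics.

Definition serial (M : model) : Prop := forall x : world M, exists y, acc M x y.

Section Serialization.
Variable M : model.

Definition dead_end (u : world M) : Prop := forall v, ~ acc M u v.

Definition serial_acc (x y : option (world M)) : Prop :=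
  match x, y with
  | Some u, Some v => acc M u v
  | Some u, None => dead_end u
  | None, None => True
  | None, Some _ => False
  end.

Definition serial_val (p : nat) (x : option (world M)) : R :=
  match x with Some u => val M p u | None => 0 end.

Lemma serial_val_bounded (p : nat) (x : option (world M)) :
  - Defs.bound M <= serial_val p x <= Defs.bound M.
Proof. destruct x as [u|]; simpl; [apply val_bounded | pose proof (bound_nonneg M); lra]. Qed.

Definition serial_model : model :=
  {| world := option (world M); world_inhabited := inhabits None; acc := serial_acc;
     val := serial_val; Defs.bound := Defs.bound M; bound_nonneg := bound_nonneg M;
     val_bounded := serial_val_bounded |}.

Lemma serial_model_serial : serial serial_model.
Proof.
  intros [u|]; [|exists None; exact I].
  destruct (classic (dead_end u)) as [Hd|Hd]; [exists None; exact Hd|].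
  apply not_all_not_ex in Hd. destruct Hd as [v Hv]. exists (Some v). exact Hv.
Qed.

Lemma eval_serial_none (f : form) : eval serial_model f None = 0.
Proof.
  induction f as [p|a IHa b IHb|a IHa b IHb|a IHa b IHb|a IHa b IHb| |a IHa];
    simpl in *; try rewrite IHa; try rewrite IHb; try lra.
  - apply Rmin_left; lra.
  - apply Rmax_left; lra.
  - apply inf_R_singleton. intros v. split.
    + intros [[y|] [Hy ->]]; [contradiction | exact IHa].
    + intros ->. exists None. split; [exact I | symmetry; exact IHa].
Qed.

Lemma eval_serial_some (f : form) (u : world M) : eval serial_model f (Some u) = eval M f u.
Proof.
  revert u.
  induction f as [p|a IHa b IHb|a IHa b IHb|a IHa b IHb|a IHa b IHb| |a IHa];
    intros u; simpl in *; try rewrite IHa; try rewrite IHb; try reflexivity.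
  destruct (classic (dead_end u)) as [Hd|Hd].
  - rewrite (inf_R_empty (fun v => exists y, acc M u y /\ v = eval M a y))
      by (intros v [y [Hy _]]; exact (Hd y Hy)).
    apply inf_R_singleton. intros v. split.
    + intros [[y|] [Hy ->]]; [exfalso; exact (Hd y Hy) | apply eval_serial_none].
    + intros ->. exists None. split; [exact Hd | symmetry; apply eval_serial_none].
  - unfold inf_R. f_equal. apply Glb_Rbar_eqset. intros v. split.
    + intros [[y|] [Hy ->]]; [exists y; auto | contradiction].
    + intros [y [Hy ->]]. exists (Some y). auto.
Qed.

End Serialization.

Lemma sum_lf_perm (v : form -> nat -> R) (L L' : list lform) :
  Permutation L L' -> sum_lf v L = sum_lf v L'.
Proof. induction 1; simpl; lra. Qed.

Lemma sum_lf_ext (v v' : form -> nat -> R) (L : list lform) :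
  (forall f i, In (f, i) L -> v f i = v' f i) -> sum_lf v L = sum_lf v' L.
Proof.
  induction L as [|[f i] L IH]; intros H; simpl; [reflexivity|].
  rewrite H by (left; reflexivity). rewrite IH; [reflexivity|].
  intros g j Hg. apply H. right. exact Hg.
Qed.

Lemma is_lim_seq_sum_lf (v : nat -> form -> nat -> R) (a : form -> nat -> R) (L : list lform) :
  (forall f i, In (f, i) L -> is_lim_seq (fun n => v n f i) (a f i)) ->
  is_lim_seq (fun n => sum_lf (v n) L) (sum_lf a L).
Proof.
  induction L as [|[f i] L IH]; intros H; simpl; [apply is_lim_seq_const|].
  apply is_lim_seq_plus'; [apply H; left; reflexivity|].
  apply IH. intros g j Hg. apply H. right. exact Hg.
Qed.

Definition sat_approx (d e : R) (v : form -> nat -> R) (n : node) : Prop :=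
  match n with
  | Ineq G Gt D => d <= sum_lf v G - sum_lf v D
  | Ineq G Ge D => - e <= sum_lf v G - sum_lf v D
  | Rel _ _ => True
  end.

Definition node_lforms (n : node) : list lform :=
  match n with Ineq G _ D => G ++ D | Rel _ _ => [] end.

Lemma sat_of_vanishing_approx_sat (B : branch) (d : R) (b : form -> R)
    (v : nat -> form -> nat -> R) (eps : nat -> R) :
  0 < d -> is_lim_seq eps 0 ->
  (forall n f i, - b f <= v n f i <= b f) ->
  (forall n m, In m B -> sat_approx d (eps n) (v n) m) ->
  exists a, forall m, In m B -> sat_node a m.
Proof.
  intros Hd Heps Hb Hsat.
  destruct (bounded_seqs_common_subseq (flat_map node_lforms B)
              (fun n lf => v n (fst lf) (snd lf)) (fun lf => b (fst lf)))
    as [phi [Hphi Hlim]]; [intros n [f i]; apply Hb|].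
  set (a f i := real (Lim_seq (fun n => v (phi n) f i))).
  exists a. intros [G s D|i j] Hm; [|exact I].
  assert (Hconv : forall L, incl L (G ++ D) ->
             is_lim_seq (fun n => sum_lf (v (phi n)) L) (sum_lf a L)).
  { intros L HL. apply is_lim_seq_sum_lf. intros f i Hfi.
    apply (Lim_seq_correct' (fun n => v (phi n) f i)).
    apply (Hlim (f, i)), in_flat_map. exists (Ineq G s D). auto. }
  pose proof (is_lim_seq_minus' _ _ _ _
                (Hconv G (incl_appl D (incl_refl G))) (Hconv D (incl_appr G (incl_refl D))))
    as Hexcess.
  pose proof (fun n => Hsat (phi n) _ Hm) as Hn. destruct s; simpl in *.
  - pose proof (is_lim_seq_le _ _ d _ Hn (is_lim_seq_const d) Hexcess) as H. simpl in H. lra.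
  - pose proof (proj1 (is_lim_seq_opp _ _) (is_lim_seq_subseq eps 0 phi Hphi Heps)) as Hopp.
    pose proof (is_lim_seq_le _ _ _ _ Hn Hopp Hexcess) as H. simpl in H. lra.
Qed.

Section Realization.
Variable M : model.

Definition eval_at (w : nat -> world M) (f : form) (i : nat) : R := eval M f (w i).

Definition node_holds (d e : R) (w : nat -> world M) (n : node) : Prop :=
  match n with
  | Rel i j => acc M (w i) (w j)
  | _ => sat_approx d e (eval_at w) n
  end.

Definition branch_holds (d e : R) (w : nat -> world M) (B : branch) : Prop :=
  forall n, In n B -> node_holds d e w n.

Lemma branch_holds_app (d e : R) (w : nat -> world M) (N B : branch) :
  branch_holds d e w N -> branch_holds d e w B -> branch_holds d e w (N ++ B).
Proof. intros HN HB n Hn. apply in_app_or in Hn. destruct Hn; auto. Qed.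

Lemma node_holds_mono_e (d e e' : R) (w : nat -> world M) (n : node) :
  e <= e' -> node_holds d e w n -> node_holds d e' w n.
Proof. intros He. destruct n as [G [|] D|i j]; simpl; lra || auto. Qed.

Lemma node_holds_ext (d e : R) (w w' : nat -> world M) (n : node) :
  (forall k, In k (node_labels n) -> w k = w' k) -> node_holds d e w n -> node_holds d e w' n.
Proof.
  intros Hw. destruct n as [G s D|i j]; simpl in *.
  - assert (Hsum : forall L, incl (map snd L) (map snd G ++ map snd D) ->
                     sum_lf (eval_at w) L = sum_lf (eval_at w') L).
    { intros L HL. apply sum_lf_ext. intros f i Hi. unfold eval_at. rewrite Hw; [reflexivity|].
      apply HL, (in_map snd _ (f, i)), Hi. }
    rewrite !Hsum by (apply incl_appl + apply incl_appr; apply incl_refl).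
    exact (fun H => H).
  - rewrite !Hw by auto. exact (fun H => H).
Qed.

Lemma node_holds_excess_le (d e : R) (w : nat -> world M) (s : rel_sym) (G D G' D' : list lform) :
  sum_lf (eval_at w) G - sum_lf (eval_at w) D <= sum_lf (eval_at w) G' - sum_lf (eval_at w) D' ->
  node_holds d e w (Ineq G s D) -> node_holds d e w (Ineq G' s D').
Proof. destruct s; simpl; lra. Qed.

Lemma node_holds_perm (d e : R) (w : nat -> world M) (s : rel_sym) (G D G' D' : list lform) :
  Permutation G G' -> Permutation D D' ->
  node_holds d e w (Ineq G s D) -> node_holds d e w (Ineq G' s D').
Proof.
  intros HG HD. apply node_holds_excess_le.
  rewrite (sum_lf_perm _ _ _ HG), (sum_lf_perm _ _ _ HD). lra.
Qed.

Definition upd (w : nat -> world M) (j : nat) (y : world M) (k : nat) : world M :=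
  if Nat.eq_dec k j then y else w k.

Lemma branch_holds_upd_fresh (d e : R) (w : nat -> world M) (B : branch) (j : nat) (y : world M) :
  fresh j B -> branch_holds d e w B -> branch_holds d e (upd w j y) B.
Proof.
  intros Hj Hw n Hn. apply (node_holds_ext d e w); [|exact (Hw n Hn)].
  intros k Hk. unfold upd. destruct Nat.eq_dec as [->|]; [|reflexivity].
  exfalso. exact (Hj n Hn Hk).
Qed.

Lemma fresh_neq (j : nat) (B : branch) (n : node) (i : nat) :
  fresh j B -> In n B -> In i (node_labels n) -> i <> j.
Proof. intros Hj Hn Hi ->. exact (Hj n Hn Hi). Qed.

Definition some_extension_holds (d e : R) (B : branch) (exts : list (list node)) : Prop :=
  exists N, In N exts /\ exists w, branch_holds d e w (N ++ B).

Lemma some_extension_holds_head (d e : R) (w : nat -> world M) (B N : branch)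
    (exts : list (list node)) :
  branch_holds d e w N -> branch_holds d e w B -> some_extension_holds d e B (N :: exts).
Proof.
  intros HN HB. exists N. split; [left; reflexivity|]. exists w. apply branch_holds_app; auto.
Qed.

Lemma some_extension_holds_cons (d e : R) (B N : branch) (exts : list (list node)) :
  some_extension_holds d e B exts -> some_extension_holds d e B (N :: exts).
Proof. intros [N' [HN' Hw]]. exists N'. split; [right|]; assumption. Qed.

Hypothesis ser : serial M.

Lemma box_right_sound (d e : R) (w : nat -> world M) (B : branch) (G D : list lform)
    (s : rel_sym) (a : form) (i j : nat) :
  0 < e -> In (Ineq G s D) B -> In (FBox a, i) D -> fresh j B -> branch_holds d e w B ->
  some_extension_holds d e B [[Ineq [(FBox a, i)] Ge [(a, j)]; Rel i j]].
Proof.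
  intros He Hin Hi Hj Hw.
  destruct (ser (w i)) as [y0 Hy0].
  destruct (eval_box_approx M a (w i) y0 e Hy0 He) as [y [Hy Hlt]].
  assert (Hij : i <> j).
  { apply (fresh_neq j B _ i Hj Hin). apply in_or_app. right. exact (in_map snd _ _ Hi). }
  apply (some_extension_holds_head d e (upd w j y)); [|apply branch_holds_upd_fresh; assumption].
  intros n [<-|[<-|[]]]; simpl; unfold eval_at, upd;
    repeat destruct Nat.eq_dec; try congruence; lra.
Qed.

Lemma new_successor_sound (d e : R) (w : nat -> world M) (B : branch) (i k j : nat) :
  In (Rel i k) B -> fresh j B -> branch_holds d e w B -> some_extension_holds d e B [[Rel k j]].
Proof.
  intros Hr Hj Hw.
  destruct (ser (w k)) as [y Hy].
  assert (Hkj : k <> j) by (apply (fresh_neq j B (Rel i k)); simpl; auto).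
  apply (some_extension_holds_head d e (upd w j y)); [|apply branch_holds_upd_fresh; assumption].
  intros n [<-|[]]; simpl; unfold upd.
  repeat destruct Nat.eq_dec; congruence.
Qed.

Ltac excess_arith H := eapply node_holds_excess_le; [|exact H]; simpl;
  unfold eval_at; simpl; unfold Rmin, Rmax; repeat destruct Rle_dec; lra.

Lemma step_sound (d e : R) (w : nat -> world M) (B : branch) (exts : list (list node)) :
  0 < e -> step B exts -> branch_holds d e w B -> some_extension_holds d e B exts.
Proof.
  intros He Hs Hw.
  destruct Hs as [L G s D i Hin Hp|G s L D i Hin Hp|L G s D a b i Hin Hp|G s L D a b i Hin Hp
    |L G s D a b i Hin Hp|G s L D a b i Hin Hp|L G s D a b i Hin Hp|G s L D a b i Hin Hp
    |L G s D a b i Hin Hp|G s L D a b i Hin Hp|L G s D a i j Hr Hin Hp|G s L D a i j Hin Hp Hj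
    |i k j Hr Hj].
  all: try (pose proof (node_holds_perm d e w s _ _ _ _ Hp (Permutation_refl _) (Hw _ Hin)) as Hn).
  all: try (pose proof (node_holds_perm d e w s _ _ _ _ (Permutation_refl _) Hp (Hw _ Hin)) as Hn).
  (* the non-branching propositional rules *)
  1-7, 10: apply (some_extension_holds_head d e w); [|exact Hw];
    intros n Hn'; repeat destruct Hn' as [<-|Hn']; try contradiction; excess_arith Hn.
  - destruct (Rle_dec (eval M a (w i)) (eval M b (w i))) as [Hab|Hba];
      [|apply some_extension_holds_cons]; apply (some_extension_holds_head d e w);
      try exact Hw; intros n [<-|[]]; excess_arith Hn.
  - destruct (Rle_dec (eval M b (w i)) (eval M a (w i))) as [Hba|Hab];
      [|apply some_extension_holds_cons]; apply (some_extension_holds_head d e w);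
      try exact Hw; intros n [<-|[]]; excess_arith Hn.
  - apply (some_extension_holds_head d e w); [|exact Hw].
    intros n [<-|[]]. pose proof (eval_box_le M a (w i) (w j) (Hw _ Hr)).
    simpl. unfold eval_at. lra.
  - exact (box_right_sound d e w B G L s a i j He Hin
             (Permutation_in _ (Permutation_sym Hp) (in_eq _ _)) Hj Hw).
  - exact (new_successor_sound d e w B i k j Hr Hj Hw).
Qed.

Lemma closed_branch_refutes (d : R) (B : branch) :
  0 < d -> branch_closed B -> exists e, 0 < e /\ forall w, ~ branch_holds d e w B.
Proof.
  intros Hd Hclosed. apply NNPP. intros Hno.
  assert (Hw : forall n, exists w, branch_holds d (/ (INR n + 1)) w B).
  { intros n. apply NNPP. intros Hn. apply Hno. exists (/ (INR n + 1)).
    split; [apply inv_succ_pos|]. intros w Hw. apply Hn. exists w. exact Hw. }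
  destruct (choice _ Hw) as [W HW].
  apply Hclosed.
  destruct (sat_of_vanishing_approx_sat B d (form_bound (Defs.bound M)) (fun n => eval_at (W n))
              (fun n => / (INR n + 1)) Hd is_lim_seq_inv_succ) as [a Ha].
  - intros n f i. apply eval_bounded.
  - intros n [G s D|i j] Hm; [exact (HW n _ Hm) | exact I].
  - exists a. intros m Hm _. exact (Ha m Hm).
Qed.

Lemma closable_refutes (d : R) (B : branch) :
  0 < d -> closable B -> exists e, 0 < e /\ forall w, ~ branch_holds d e w B.
Proof.
  intros Hd HB. induction HB as [B Hclosed|B exts Hs _ IH].
  - exact (closed_branch_refutes d B Hd Hclosed).
  - destruct (ex_pos_forall_In exts (fun N e => forall w, ~ branch_holds d e w (N ++ B)))
      as [e [He Hno]]; [| exact IH |].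
    + intros N e e' He' Hno w Hw. apply (Hno w).
      intros n Hn. apply (node_holds_mono_e d e'); [lra | exact (Hw n Hn)].
    + exists e. split; [exact He|]. intros w Hw.
      destruct (step_sound d e w B exts He Hs Hw) as [N [HN [w' Hw']]].
      exact (Hno N HN w' Hw').
Qed.

End Realization.

Theorem proposition3p4 : forall phi : form, LKA_derivable phi -> KA_valid phi.
Proof.
  intros phi Hder M x. apply Rnot_lt_le. intros Hneg.
  destruct (closable_refutes (serial_model M) (serial_model_serial M) (- eval M phi x) _
              ltac:(lra) Hder) as [e [He Hno]].
  destruct (serial_model_serial M (Some x)) as [y Hy].
  apply (Hno (fun k => if Nat.eq_dec k 2 then y else Some x)).
  intros n [<-|[<-|[]]]; simpl.
  - unfold eval_at. simpl. rewrite eval_serial_some. lra.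
  - exact Hy.
Qed.
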